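(* The weak Krull dimension of $\mathcal{S}'(\mathbb{Z}^{d})$ is $1$: finitely generated proper prime ideals of $\mathcal{S}'(\mathbb{Z}^{d})$ exist, and if $\mathfrak{p}_1\subseteq\mathfrak{p}_2$ are finitely generated proper prime ideals of $\mathcal{S}'(\mathbb{Z}^{d})$, then $\mathfrak{p}_1=\mathfrak{p}_2$ (so every chain of distinct finitely generated proper prime ideals consists of exactly one ideal).
   Context: For $\mathbf{n}=(n_1,\dots,n_d)\in\mathbb{Z}^d$ write $\|\mathbf{n}\|:=|n_1|+\cdots+|n_d|$. $\mathcal{S}'(\mathbb{Z}^{d})$ denotes the set of all maps $f:\mathbb{Z}^d\to\mathbb{C}$ of at most polynomial growth, i.e. for which there exist a real $M>0$ and an integer $m\geq 0$ with $|f(\mathbf{n})|\leq M(1+\|\mathbf{n}\|)^m$ for all $\mathbf{n}\in\mathbb{Z}^d$. It is a commutative unital ring under pointwise addition and multiplication. The weak Krull dimension of a commutative ring is the supremum of the lengths of chains of distinct proper finitely generated prime ideals, where (as in the paper) the length of a chain is counted as the number of ideals in it. *)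

From HB Require Import structures.
From mathcomp Require Import all_boot all_order all_algebra.
From mathcomp Require Import reals complex.
Set Implicit Arguments. Unset Strict Implicit. Unset Printing Implicit Defensive.
Import Order.TTheory GRing.Theory Num.Theory.
Local Open Scope ring_scope.

Definition Zd (d : nat) := 'I_d -> int.

Definition l1norm (d : nat) (n : Zd d) : nat := (\sum_(i < d) `|n i|%N)%N.

Definition cabs (R : realType) (z : R[i]) : R := Normc.normc z.

Definition Sprime (R : realType) (d : nat) (f : Zd d -> R[i]) : Prop :=
  exists (M : R) (m : nat), 0 < M /\
    forall n : Zd d, cabs (f n) <= M * (1 + (l1norm n)%:R) ^+ m.

Definition fadd (R : realType) d (f g : Zd d -> R[i]) : Zd d -> R[i] :=
  fun n => f n + g n.
Definition fmul (R : realType) d (f g : Zd d -> R[i]) : Zd d -> R[i] :=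
  fun n => f n * g n.

Definition is_ideal (R : realType) d (I : (Zd d -> R[i]) -> Prop) : Prop :=
  [/\ (forall f, I f -> Sprime f),
      I (fun _ => 0),
      (forall f g, I f -> I g -> I (fadd f g)) &
      (forall a f, Sprime a -> I f -> I (fmul a f))].

Definition is_proper (R : realType) d (I : (Zd d -> R[i]) -> Prop) : Prop :=
  exists f, Sprime f /\ ~ I f.

Definition is_prime_ideal (R : realType) d (I : (Zd d -> R[i]) -> Prop) : Prop :=
  [/\ is_ideal I, is_proper I &
      forall f g, Sprime f -> Sprime g -> I (fmul f g) -> I f \/ I g].

Definition is_fg (R : realType) d (I : (Zd d -> R[i]) -> Prop) : Prop :=
  exists gs : seq (Zd d -> R[i]),
    (forall i : 'I_(size gs), Sprime (nth (fun _ => 0) gs i)) /\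
    forall f, I f <->
      exists a : 'I_(size gs) -> (Zd d -> R[i]),
        (forall i, Sprime (a i)) /\
        f = (fun n => \sum_(i < size gs) a i n * nth (fun _ => 0) gs i n).

Definition fg_proper_prime (R : realType) d (I : (Zd d -> R[i]) -> Prop) : Prop :=
  is_prime_ideal I /\ is_fg I.

From HB Require Import structures.
From mathcomp Require Import all_boot all_order all_algebra.
From mathcomp Require Import reals complex.
From mathcomp Require Import lra.
From Stdlib Require Import FunctionalExtensionality Classical PropExtensionality.
Set Implicit Arguments. Unset Strict Implicit. Unset Printing Implicit Defensive.
Import Order.TTheory GRing.Theory Num.Theory.
Local Open Scope ring_scope.
Local Open Scope complex_scope.

(* Every finitely generated proper prime ideal p of S'(Z^d) is a point ideal
   I_z = {f | f z = 0}; since point ideals are finitely generated prime and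
   pairwise incomparable, the weak Krull dimension is 1.

   Let g_1, ..., g_k generate p and put G = |g_1| + ... + |g_k|.
   - G = sum_i (conj g_i / |g_i|) g_i lies in p, and so does s = sqrt G
     because s * s = G and p is prime.
   - Writing s = sum_i a_i g_i gives sqrt G <= A G with A = sum_i |a_i| of
     polynomial growth, i.e. 1/G <= A^2 wherever G does not vanish.
   - Hence every f of polynomial growth vanishing on the common zero set Z
     of the g_i equals (f/G) G with f/G of polynomial growth, so f is in p;
     conversely every element of p vanishes on Z.  Properness makes Z
     nonempty, and primality applied to delta_z * (1 - delta_z) = 0 makes Z
     a single point z, so p = I_z. *)

Section Modulus.
Variable R : realType.
Implicit Types x y : R[i].

Lemma normC_cabs x : `|x| = (cabs x)%:C.
Proof. by []. Qed.

Lemma cabs_ge0 x : 0 <= cabs x.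
Proof. by rewrite -lecR -normC_cabs normr_ge0. Qed.

Lemma cabsM x y : cabs (x * y) = cabs x * cabs y.
Proof. exact: Normc.normcM. Qed.

Lemma cabs0 : cabs (0 : R[i]) = 0.
Proof. exact: Normc.normc0. Qed.

Lemma cabs1 : cabs (1 : R[i]) = 1.
Proof. exact: Normc.normc1. Qed.

Lemma cabs_eq0 x : (cabs x == 0) = (x == 0).
Proof. by apply/eqP/eqP => [|->]; [exact: Normc.eq0_normc | rewrite cabs0]. Qed.

Lemma cabsR (r : R) : cabs r%:C = `|r|.
Proof. by rewrite /cabs /Normc.normc /= expr0n /= addr0 sqrtr_sqr. Qed.

Lemma cabsD x y : cabs (x + y) <= cabs x + cabs y.
Proof. by rewrite -lecR rmorphD /= -!normC_cabs ler_normD. Qed.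

Lemma cabs_sum k (G : 'I_k -> R[i]) :
  cabs (\sum_(i < k) G i) <= \sum_(i < k) cabs (G i).
Proof.
rewrite -lecR rmorph_sum -normC_cabs; apply: le_trans (ler_norm_sum _ _ _) _.
by apply: ler_sum => i _; rewrite normC_cabs.
Qed.

Lemma cabs_bool (b : bool) : cabs (b%:R : R[i]) <= 1.
Proof. by case: b; rewrite ?cabs0 ?cabs1. Qed.

End Modulus.

Lemma ler_sum_term (R : numDomainType) k (G : 'I_k -> R) j :
  (forall i, 0 <= G i) -> G j <= \sum_(i < k) G i.
Proof. by move=> G_ge0; rewrite (bigD1 j) //= lerDl sumr_ge0. Qed.

Section PolynomialGrowth.
Variables (R : realType) (d : nat).
Local Notation F := (Zd d -> R[i]).
Implicit Types f g h : F.

Lemma weight_le (n : Zd d) m m' : (m <= m')%N ->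
  (1 + (l1norm n)%:R) ^+ m <= (1 + (l1norm n)%:R) ^+ m' :> R.
Proof. by move=> le_mm'; apply: ler_weXn2l => //; rewrite lerDl. Qed.

Lemma Sprime_dom h f :
  Sprime h -> (forall n, cabs (f n) <= cabs (h n)) -> Sprime f.
Proof.
by move=> [M [m [M_gt0 hM]]] fh; exists M, m; split=> // n; apply: le_trans (hM n).
Qed.

Lemma Sprime_const (c : R[i]) : Sprime (fun _ : Zd d => c).
Proof.
exists (cabs c + 1), 0%N; split=> [|n]; have := cabs_ge0 c; rewrite ?expr0; lra.
Qed.

Lemma Sprime_mul f g : Sprime f -> Sprime g -> Sprime (fun n => f n * g n).
Proof.
move=> [M1 [m1 [M1_gt0 fM]]] [M2 [m2 [M2_gt0 gM]]].
exists (M1 * M2), (m1 + m2)%N; split=> [|n]; first exact: mulr_gt0.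
by rewrite cabsM exprD mulrACA ler_pM ?cabs_ge0.
Qed.

Lemma Sprime_add f g : Sprime f -> Sprime g -> Sprime (fun n => f n + g n).
Proof.
move=> [M1 [m1 [M1_gt0 fM]]] [M2 [m2 [M2_gt0 gM]]].
exists (M1 + M2), (m1 + m2)%N; split=> [|n]; first exact: addr_gt0.
apply: le_trans (cabsD _ _) _; rewrite mulrDl; apply: lerD.
- by apply: le_trans (fM n) _; apply: ler_wpM2l; [exact: ltW | exact/weight_le/leq_addr].
- by apply: le_trans (gM n) _; apply: ler_wpM2l; [exact: ltW | exact/weight_le/leq_addl].
Qed.

Lemma Sprime_sum k (G : 'I_k -> F) :
  (forall i, Sprime (G i)) -> Sprime (fun n => \sum_(i < k) G i n).
Proof.
elim: k G => [|k IH] G SG.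
  have -> : (fun n => \sum_(i < 0) G i n) = (fun _ => 0).
    by apply: functional_extensionality => n; rewrite big_ord0.
  exact: Sprime_const.
have -> : (fun n => \sum_(i < k.+1) G i n) =
    (fun n => \sum_(i < k) G (widen_ord (leqnSn k) i) n + G ord_max n).
  by apply: functional_extensionality => n; rewrite big_ord_recr.
by apply: Sprime_add => //; apply: IH.
Qed.

Lemma Sprime_cabs f : Sprime f -> Sprime (fun n => (cabs (f n))%:C).
Proof. by move=> Sf; apply: Sprime_dom Sf _ => n; rewrite cabsR ger0_norm ?cabs_ge0. Qed.

Lemma Sprime_bool (b : Zd d -> bool) : Sprime (fun n => (b n)%:R : R[i]).
Proof. by apply: Sprime_dom (Sprime_const 1) _ => n; rewrite cabs1 cabs_bool. Qed.

End PolynomialGrowth.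

Section FinitelyGeneratedPrime.
Variables (R : realType) (d : nat).
Local Notation F := (Zd d -> R[i]).
Variable gs : seq F.
Local Notation k := (size gs).
Local Notation g i := (nth (fun _ => 0) gs i).
Hypothesis Sg : forall i : 'I_k, Sprime (g i).
Variable p : F -> Prop.
Hypothesis p_gen : forall f, p f <-> exists a : 'I_k -> F,
  (forall i, Sprime (a i)) /\ f = (fun n => \sum_(i < k) a i n * g i n).
Hypothesis p_prime :
  forall f f', Sprime f -> Sprime f' -> p (fmul f f') -> p f \/ p f'.

Definition common_zero (n : Zd d) : Prop := forall i : 'I_k, g i n = 0.

Lemma p_vanishes f n : p f -> common_zero n -> f n = 0.
Proof. by move=> /p_gen [a [_ ->]] zn; apply: big1 => i _; rewrite zn mulr0. Qed.

Definition phase (i : 'I_k) (n : Zd d) : R[i] := conjc (g i n) / `|g i n|.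

Lemma phaseK i n : phase i n * g i n = `|g i n|.
Proof.
rewrite /phase; have [->|gn0] := eqVneq (g i n) 0; first by rewrite normr0 !mulr0.
rewrite mulrAC -[conjc _ * _]mulrC -sqr_normc expr2 -mulrA divff ?mulr1 //.
by rewrite normr_eq0.
Qed.

Lemma Sprime_phase i : Sprime (phase i).
Proof.
apply: Sprime_dom (Sprime_const d 1) _ => n.
rewrite cabs1 -lecR -normC_cabs /phase normrM normcJ normfV normr_id.
by have [->|gn0] := eqVneq (g i n) 0; rewrite ?normr0 ?mul0r ?divff ?normr_eq0.
Qed.

Definition gnorm (n : Zd d) : R := \sum_(i < k) cabs (g i n).

Lemma gnorm_ge0 n : 0 <= gnorm n.
Proof. exact/sumr_ge0/(fun i _ => cabs_ge0 _). Qed.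

Lemma gnorm_eq0 n : gnorm n = 0 -> common_zero n.
Proof.
move=> /eqP; rewrite psumr_eq0 => [/allP zero i|i _]; last exact: cabs_ge0.
by apply/eqP; rewrite -cabs_eq0; apply: zero; apply: mem_index_enum.
Qed.

Lemma gnormE n : (gnorm n)%:C = \sum_(i < k) phase i n * g i n.
Proof. by rewrite rmorph_sum; apply: eq_bigr => i _; rewrite phaseK. Qed.

Lemma p_gnorm : p (fun n => (gnorm n)%:C).
Proof.
apply/p_gen; exists phase; split; first exact: Sprime_phase.
by apply: functional_extensionality => n; rewrite gnormE.
Qed.

(* sqrt G has polynomial growth, and it lies in p since p is prime. *)
Definition sqrt_gnorm (n : Zd d) : R[i] := sqrtc (gnorm n)%:C.

Lemma sqrt_gnorm_sq n : cabs (sqrt_gnorm n) ^+ 2 = gnorm n.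
Proof. by rewrite expr2 -cabsM -expr2 sqr_sqrtc cabsR ger0_norm ?gnorm_ge0. Qed.

Lemma Sprime_sqrt_gnorm : Sprime sqrt_gnorm.
Proof.
have SG : Sprime (fun n => 1 + (gnorm n)%:C).
  apply: Sprime_add; first exact: Sprime_const.
  apply: Sprime_dom (Sprime_sum (fun i => Sprime_mul (Sprime_phase i) (Sg i))) _.
  by move=> n; rewrite gnormE.
apply: Sprime_dom SG _ => n.
rewrite -(rmorph1 (real_complex R)) -rmorphD cabsR ger0_norm; last first.
  by have := gnorm_ge0 n; lra.
by rewrite -sqrt_gnorm_sq; have := cabs_ge0 (sqrt_gnorm n); nra.
Qed.

Lemma p_sqrt_gnorm : p sqrt_gnorm.
Proof.
have p_sq : p (fmul sqrt_gnorm sqrt_gnorm).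
  have -> : fmul sqrt_gnorm sqrt_gnorm = (fun n => (gnorm n)%:C).
    by apply: functional_extensionality => n; rewrite /fmul -expr2 sqr_sqrtc.
  exact: p_gnorm.
by case: (p_prime Sprime_sqrt_gnorm Sprime_sqrt_gnorm p_sq).
Qed.

(* Key estimate: 1/G is bounded by a function of polynomial growth off the
   common zero set, because sqrt G = sum_i a_i g_i <= (sum_i |a_i|) G. *)
Lemma inv_gnorm_bound : exists A : Zd d -> R,
  [/\ Sprime (fun n => (A n)%:C), (forall n, 0 <= A n) &
      (forall n, gnorm n != 0 -> 1 <= A n ^+ 2 * gnorm n)].
Proof.
have [a [Sa sqrtE]] := proj1 (p_gen _) p_sqrt_gnorm.
exists (fun n => \sum_(i < k) cabs (a i n)); split.
- have -> : (fun n => (\sum_(i < k) cabs (a i n))%:C) =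
      (fun n => \sum_(i < k) (cabs (a i n))%:C).
    by apply: functional_extensionality => n; rewrite rmorph_sum.
  by apply: Sprime_sum => i; apply: Sprime_cabs.
- by move=> n; apply/sumr_ge0 => i _; apply: cabs_ge0.
move=> n gn_neq0; set A := \sum_(i < k) _.
have A_ge0 : 0 <= A by apply/sumr_ge0 => i _; apply: cabs_ge0.
have gn_gt0 : 0 < gnorm n by rewrite lt_def gn_neq0 gnorm_ge0.
have sqrt_le : cabs (sqrt_gnorm n) <= A * gnorm n.
  rewrite sqrtE; apply: le_trans (cabs_sum _) _.
  rewrite /gnorm mulr_sumr; apply: ler_sum => i _; rewrite cabsM.
  apply: ler_wpM2r; first exact: cabs_ge0.
  by rewrite /A; apply: ler_sum_term => j; apply: cabs_ge0.
have sq_le : gnorm n <= (A * gnorm n) ^+ 2.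
  by rewrite -{1}sqrt_gnorm_sq !expr2 ler_pM ?cabs_ge0.
by rewrite -(ler_pM2l gn_gt0) mulr1 mulrCA -expr2 -exprMn.
Qed.

(* Conversely, every function of polynomial growth vanishing on the common
   zeros is (f/G) * G with f/G of polynomial growth, hence lies in p. *)
Lemma p_of_vanishing f :
  Sprime f -> (forall n, common_zero n -> f n = 0) -> p f.
Proof.
move=> Sf f_zero; have [A [SA A_ge0 A_bound]] := inv_gnorm_bound.
pose c n := f n / (gnorm n)%:C.
have Sc : Sprime c.
  apply: Sprime_dom (Sprime_mul (Sprime_mul Sf SA) SA) _ => n.
  rewrite !cabsM cabsR ger0_norm ?A_ge0 // -mulrA.
  apply: ler_wpM2l; first exact: cabs_ge0.
  have [gn0|gn_neq0] := eqVneq (gnorm n) 0.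
    by rewrite gn0 invr0 cabs0 mulr_ge0.
  have gn_gt0 : 0 < gnorm n by rewrite lt_def gn_neq0 gnorm_ge0.
  rewrite -rmorphV ?unitfE // cabsR ger0_norm ?invr_ge0 ?gnorm_ge0 //.
  by rewrite -[X in X <= _]mul1r ler_pdivrMr // -expr2 A_bound.
apply/p_gen; exists (fun i n => c n * phase i n); split.
  by move=> i; apply: Sprime_mul => //; apply: Sprime_phase.
apply: functional_extensionality => n.
under eq_bigr do rewrite -mulrA.
rewrite -mulr_sumr -gnormE /c; have [gn0|gn_neq0] := eqVneq (gnorm n) 0.
  by rewrite (f_zero n (gnorm_eq0 gn0)) !mul0r.
by rewrite divfK // -(rmorph0 (real_complex R)) (inj_eq (@complexI R)).
Qed.

End FinitelyGeneratedPrime.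

Section PointIdeals.
Variables (R : realType) (d : nat).
Local Notation F := (Zd d -> R[i]).

Definition at_point (z n : Zd d) : bool := [forall i, n i == z i].

Lemma at_pointP z n : reflect (n = z) (at_point z n).
Proof.
apply: (iffP forallP) => [eq_nz|-> i //].
by apply: functional_extensionality => i; apply/eqP.
Qed.

Definition delta (z n : Zd d) : R[i] := (at_point z n)%:R.
Definition off_point (z n : Zd d) : R[i] := (~~ at_point z n)%:R.

Lemma Sprime_delta z : Sprime (delta z).
Proof. exact: Sprime_bool. Qed.

Lemma Sprime_off_point z : Sprime (off_point z).
Proof. exact: Sprime_bool. Qed.

(* delta_z * (1 - delta_z) = 0 witnesses that a prime ideal cannot contain
   functions vanishing at two different points only. *)
Lemma delta_off_point z n : delta z n * off_point z n = 0.
Proof. by rewrite /delta /off_point; case: at_point; rewrite ?mul0r ?mulr0. Qed.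

Lemma delta_at z : delta z z = 1.
Proof. by rewrite /delta; case: at_pointP. Qed.

Lemma off_point_at z : off_point z z = 0.
Proof. by rewrite /off_point; case: at_pointP. Qed.

Lemma off_point_eq0 z n : off_point z n = 0 -> n = z.
Proof. by rewrite /off_point; case: at_pointP => // _ /eqP; rewrite oner_eq0. Qed.

Lemma off_pointK f z n : f z = 0 -> f n * off_point z n = f n.
Proof. by rewrite /off_point; case: at_pointP => [-> ->|_ _]; rewrite ?mul0r ?mulr1. Qed.

Definition point_ideal (z : Zd d) (f : F) : Prop := Sprime f /\ f z = 0.

Lemma point_ideal_prime z : is_prime_ideal (point_ideal z).
Proof.
split; first split.
- by move=> f [].
- by split; [exact: Sprime_const|].
- move=> f f' [Sf fz] [Sf' f'z]; split; first exact: Sprime_add.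
  by rewrite /fadd fz f'z addr0.
- by move=> a f Sa [Sf fz]; split; [exact: Sprime_mul | rewrite /fmul fz mulr0].
- exists (fun _ => 1); split; first exact: Sprime_const.
  by move=> [_ /eqP]; rewrite oner_eq0.
- move=> f f' Sf Sf' [_ /eqP]; rewrite /fmul mulf_eq0.
  by case/orP=> /eqP; [left | right].
Qed.

Lemma point_ideal_fg z : is_fg (point_ideal z).
Proof.
exists [:: off_point z]; split=> [[[|]] //= _|f]; first exact: Sprime_off_point.
split=> [[Sf fz]|[a [Sa ->]]].
  exists (fun _ => f); split=> //.
  by apply: functional_extensionality => n; rewrite big_ord1 /= off_pointK.
split; last by rewrite big_ord1 /= off_point_at mulr0.
apply: Sprime_sum => -[[|] //= ?]; exact/Sprime_mul/Sprime_off_point.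
Qed.

Lemma point_ideal_fg_prime z : fg_proper_prime (point_ideal z).
Proof. by split; [exact: point_ideal_prime | exact: point_ideal_fg]. Qed.

Lemma fg_prime_is_point_ideal (p : F -> Prop) :
  fg_proper_prime p -> exists z, forall f, p f <-> point_ideal z f.
Proof.
move=> [[p_ideal [f0 [Sf0 not_pf0]] p_prime] [gs [Sg p_gen]]].
have [z zero_z] : exists z, common_zero gs z.
  apply: NNPP => no_zero; apply/not_pf0/(p_of_vanishing Sg p_gen p_prime Sf0).
  by move=> n zero_n; case: no_zero; exists n.
have p_prod : p (fmul (delta z) (off_point z)).
  have -> : fmul (delta z) (off_point z) = (fun _ => 0).
    by apply: functional_extensionality => n; apply: delta_off_point.
  by case: p_ideal.
have zero_unique n : common_zero gs n -> n = z.
  move=> zero_n; have [pd|po] := p_prime _ _ (Sprime_delta z) (Sprime_off_point z) p_prod.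
    by have := p_vanishes p_gen pd zero_z; rewrite delta_at => /eqP; rewrite oner_eq0.
  exact/off_point_eq0/(p_vanishes p_gen po zero_n).
exists z => f; split=> [pf|[Sf fz]].
  split; last exact: (p_vanishes p_gen pf zero_z).
  by case: p_ideal => p_Sprime _ _ _; apply: p_Sprime.
by apply: (p_of_vanishing Sg p_gen p_prime Sf) => n /zero_unique ->.
Qed.

End PointIdeals.

Arguments off_point {R d}.
Arguments point_ideal {R d}.

Theorem theorem4p6 (R : realType) (d : nat) :
  (exists p : (Zd d -> R[i]) -> Prop, fg_proper_prime p) /\
  (forall p1 p2 : (Zd d -> R[i]) -> Prop,
     fg_proper_prime p1 -> fg_proper_prime p2 ->
     (forall f, p1 f -> p2 f) -> p1 = p2).
Proof.
split; first by exists (point_ideal (fun _ => 0)); apply: point_ideal_fg_prime.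
move=> p1 p2 fg1 fg2 sub12.
have [z1 p1E] := fg_prime_is_point_ideal fg1.
have [z2 p2E] := fg_prime_is_point_ideal fg2.
(* off_point z1 lies in p1, hence in p2 = I_z2, so z2 = z1. *)
have z21 : z2 = z1.
  have : p1 (off_point z1) by apply/p1E; split; [apply: Sprime_off_point | apply: off_point_at].
  by move=> /sub12 /p2E [_ /off_point_eq0].
apply: functional_extensionality => f; apply: propositional_extensionality.
by rewrite p1E p2E z21.
Qed.
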